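(* Let $\mathbf r=\binom{r_1}{r_2}\in\mathbb Q^2$ and let $a,b,d\in\mathbb Z$ with $0\le b<a$ and $d\ge1$. Then for $\tau\in\mathbb H$, $$\varpi_{\mathbf r}\Big(\frac{a\tau+b}{d}\Big)=\prod_{j=0}^{a-1}\prod_{\ell=0}^{d-1}\varpi_{M^{-1}\binom{j+r_1}{\ell+r_2}}(\tau),\qquad M=\begin{pmatrix}a&b\\0&d\end{pmatrix}.$$
   Context: $e(z)=e^{2\pi iz}$; $\mathbb H$ the upper half plane; $\varpi(z,\tau)=\prod_{k\ge0}(1-e(z+k\tau))$, and for $\mathbf s=\binom{s_1}{s_2}\in\mathbb R^2$, $\varpi_{\mathbf s}(\tau)=\varpi(s_2\tau-s_1,\tau)$. *)

From Stdlib Require Import Reals QArith ZArith ClassicalEpsilon.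
From Coquelicot Require Import Coquelicot.
Open Scope R_scope.

(* e(z) = exp(2 pi i z), written out for z = x + i y:
   e(z) = exp(-2 pi y) (cos (2 pi x) + i sin (2 pi x)). *)
Definition ee (z : C) : C :=
  Cmult (RtoC (exp (- (2 * PI * Im z))))
        (cos (2 * PI * Re z), sin (2 * PI * Re z)).

Fixpoint prodC (n : nat) (f : nat -> C) : C :=
  match n with
  | O => RtoC 1
  | S m => Cmult (prodC m f) (f m)
  end.

(* value of the infinite product prod_{k >= 0} f k, i.e. the limit of the
   partial products (chosen by classical choice; limits in C are unique). *)
Definition infprodC (f : nat -> C) : C :=
  epsilon (inhabits (RtoC 0))
    (fun L => filterlim (fun n => prodC n f) eventually (locally L)).

Definition varpi (z tau : C) : C :=
  infprodC (fun k => Cminus (RtoC 1) (ee (Cplus z (Cmult (RtoC (INR k)) tau)))).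

Definition varpi_s (s1 s2 : R) (tau : C) : C :=
  varpi (Cminus (Cmult (RtoC s2) tau) (RtoC s1)) tau.

Definition in_H (tau : C) : Prop := 0 < Im tau.

(* M = [[a, b], [0, d]];  M^{-1} = (1/(a d)) [[d, -b], [0, a]].
   Components of M^{-1} (v1, v2)^T. *)
Definition Minv1 (a b d v1 v2 : R) : R := (d * v1 - b * v2) / (a * d).
Definition Minv2 (a b d v1 v2 : R) : R := (a * v2) / (a * d).

(* Write tau' = (a tau + b)/d and split the index k of the product defining
   varpi_r(tau') as k = m d + l with l < d.  For fixed (m, l) the factor
   1 - e(w) equals prod_{j<a} (1 - x zeta^j), where zeta = e(-1/a) and
   x = e((w - b m)/a), since x^a = e(w - b m) = e(w); and 1 - x zeta^j is
   precisely the m-th factor of varpi_{M^-1 (j + r1, l + r2)}(tau).  So the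
   partial product of varpi_r(tau') up to N d equals the product over (j, l) of
   the partial products of the right-hand factors up to N, and N -> oo gives
   the identity; all products converge because |e(z + k tau)| decays
   geometrically in k. *)

From Stdlib Require Import Reals QArith ZArith ClassicalEpsilon Lra Lia.
From Coquelicot Require Import Coquelicot.
From mathcomp Require all_boot all_algebra complex Rstruct.
Open Scope R_scope.

(* Coquelicot's C is transported to MathComp's R[i] to use the factorization
   of X^n - 1 over a primitive n-th root of unity. *)
Module RootsOfUnity.
Import all_boot all_algebra complex Rstruct GRing.Theory.
Local Open Scope ring_scope.

Lemma prod_one_sub_mul_prim_root (F : fieldType) (n : nat) (z x : F) :
  n.-primitive_root z -> \prod_(j < n) (1 - x * z ^+ j) = 1 - x ^+ n.
Proof.
move=> zP; have n_gt0 := prim_order_gt0 zP.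
have [->|x_neq0] := eqVneq x 0.
  rewrite big1 ?expr0n ?eqn0Ngt ?n_gt0 ?subr0 // => j _.
  by rewrite mul0r subr0.
have xU : x \is a GRing.unit by rewrite unitfE.
have -> : \prod_(j < n) (1 - x * z ^+ j) = x ^+ n * ('X^n - 1).[x^-1].
  rewrite -(factor_Xn_sub_1 zP) horner_prod big_mkord.
  rewrite -[in x ^+ n](card_ord n) -prodr_const -big_split.
  by apply: eq_bigr => j _; rewrite hornerXsubC /= mulrBr mulrV.
by rewrite !hornerE mulrBr -exprMn mulrV // expr1n mulr1.
Qed.

Definition C_to_complex (z : C) : Rdefinitions.R[i] := Complex z.1 z.2.

Lemma C_to_complex_inj : injective C_to_complex.
Proof. by case=> [? ?] [? ?] [-> ->]. Qed.

Lemma C_to_complexM x y : C_to_complex (Cmult x y) = C_to_complex x * C_to_complex y.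
Proof. by case: x => ? ?; case: y. Qed.

Lemma C_to_complexB x y : C_to_complex (Cminus x y) = C_to_complex x - C_to_complex y.
Proof. by case: x => ? ?; case: y. Qed.

Lemma C_to_complex1 : C_to_complex (RtoC 1) = 1.
Proof. by []. Qed.

Lemma C_to_complexX x k : C_to_complex (Cpow x k) = C_to_complex x ^+ k.
Proof. by elim: k => [|k IHk] //=; rewrite C_to_complexM IHk exprS. Qed.

Lemma C_to_complex_prodC n f :
  C_to_complex (prodC n f) = \prod_(j < n) C_to_complex (f j).
Proof.
by elim: n => [|n IHn] /=; rewrite ?big_ord0 // C_to_complexM IHn big_ord_recr.
Qed.

Lemma prodC_one_sub_mul_root (n : nat) (z x : C) :
  (0 < n)%coq_nat -> Cpow z n = RtoC 1 ->
  (forall k, (0 < k)%coq_nat -> (k < n)%coq_nat -> Cpow z k <> RtoC 1) ->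
  prodC n (fun j => Cminus (RtoC 1) (Cmult x (Cpow z j)))
  = Cminus (RtoC 1) (Cpow x n).
Proof.
move=> /ltP n_gt0 z_n z_k; apply: C_to_complex_inj.
rewrite C_to_complex_prodC C_to_complexB C_to_complexX C_to_complex1.
under eq_bigr do rewrite C_to_complexB C_to_complexM C_to_complexX C_to_complex1.
apply: prod_one_sub_mul_prim_root; apply/andP; split=> //.
apply/forallP => i; rewrite unity_rootE -C_to_complexX -C_to_complex1.
have [i_eq|i_neq] := eqVneq i.+1 n; first by rewrite i_eq z_n !eqxx.
rewrite eqbF_neg; apply/negP => /eqP/C_to_complex_inj.
by apply: z_k; apply/ltP; rewrite // ltn_neqAle i_neq ltn_ord.
Qed.
End RootsOfUnity.

Lemma exp_nat_mul (k : nat) (x : R) : exp (INR k * x) = exp x ^ k.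
Proof.
  induction k as [|k IHk].
  - simpl. now rewrite Rmult_0_l, exp_0.
  - rewrite S_INR, Rmult_plus_distr_r, Rmult_1_l, exp_plus, IHk. simpl. ring.
Qed.

Lemma exp_le (x y : R) : x <= y -> exp x <= exp y.
Proof. intros [Hlt | ->]; [now left; apply exp_increasing | right; reflexivity]. Qed.

Lemma ee_ext (u v : C) : Re u = Re v -> Im u = Im v -> ee u = ee v.
Proof. intros Hre Him. unfold ee. now rewrite Hre, Him. Qed.

Lemma ee_add (u v : C) : ee (Cplus u v) = Cmult (ee u) (ee v).
Proof.
  destruct u as [u1 u2], v as [v1 v2]. unfold ee, Cmult, Cplus, Re, Im, RtoC; simpl.
  replace (- (2 * PI * (u2 + v2))) with (- (2 * PI * u2) + - (2 * PI * v2)) by ring.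
  replace (2 * PI * (u1 + v1)) with (2 * PI * u1 + 2 * PI * v1) by ring.
  rewrite exp_plus, cos_plus, sin_plus.
  f_equal; ring.
Qed.

Lemma ee_nat (k : nat) : ee (RtoC (INR k)) = RtoC 1.
Proof.
  unfold ee, Re, Im, RtoC; simpl.
  rewrite Rmult_0_r, Ropp_0, exp_0.
  replace (2 * PI * INR k) with (0 + 2 * INR k * PI) by ring.
  rewrite cos_period, cos_0, Rplus_0_l.
  replace (sin (2 * INR k * PI)) with 0.
  - unfold Cmult; simpl. f_equal; ring.
  - symmetry. apply sin_eq_0_1. exists (2 * Z.of_nat k)%Z.
    rewrite mult_IZR, <- INR_IZR_INZ. ring.
Qed.

Lemma ee_add_nat (u : C) (k : nat) : ee (Cplus u (RtoC (INR k))) = ee u.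
Proof. rewrite ee_add, ee_nat. ring. Qed.

Lemma ee_pow (u : C) (k : nat) : Cpow (ee u) k = ee (Cmult (RtoC (INR k)) u).
Proof.
  induction k as [|k IHk].
  - simpl Cpow. rewrite <- (ee_nat 0). apply ee_ext; simpl; ring.
  - rewrite Cpow_S, IHk, <- ee_add.
    apply ee_ext; rewrite S_INR; simpl; ring.
Qed.

Lemma Cmod_ee (u : C) : Cmod (ee u) = exp (- (2 * PI * Im u)).
Proof.
  unfold ee. rewrite Cmod_mult, Cmod_R, Rabs_pos_eq by (left; apply exp_pos).
  unfold Cmod; simpl.
  rewrite !Rmult_1_r, <- !Rsqr_def, Rplus_comm, sin2_cos2, sqrt_1. ring.
Qed.

Definition varpi_term (z tau : C) (k : nat) : C :=
  Cminus (RtoC 1) (ee (Cplus z (Cmult (RtoC (INR k)) tau))).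

Lemma cvg_of_geometric_increments (p : nat -> C) (B q : R) :
  0 <= q < 1 -> (forall n, Cmod (Cminus (p (S n)) (p n)) <= B * q ^ n) ->
  exists L, filterlim p eventually (locally L).
Proof.
  intros Hq Hinc.
  set (a n := match n with O => p O | S k => Cminus (p (S k)) (p k) end).
  set (b n := match n with O => Cmod (p O) | S k => B * q ^ k end).
  assert (Hab : forall n, @norm C_AbsRing C_CompleteNormedModule (a n) <= b n).
  { intros [|k]; [right; reflexivity | apply Hinc]. }
  assert (Hb : ex_series b).
  { apply ex_series_incr_1, (@ex_series_scal_l R_AbsRing R_NormedModule B).
    apply ex_series_geom. rewrite Rabs_pos_eq; lra. }
  destruct (@ex_series_le C_AbsRing C_CompleteNormedModule a b Hab Hb) as [L HL].
  exists L. apply (filterlim_ext (sum_n a)); [|exact HL].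
  intros n. induction n as [|n IHn].
  - now rewrite sum_O.
  - rewrite sum_Sn, IHn. change (Cplus (p n) (Cminus (p (S n)) (p n)) = p (S n)). ring.
Qed.

Lemma Cmod_prodC_one_sub_le (u : nat -> C) (A q : R) :
  0 <= A -> 0 <= q < 1 -> (forall k, Cmod (u k) <= A * q ^ k) ->
  forall n, Cmod (prodC n (fun k => Cminus (RtoC 1) (u k))) <= exp (A / (1 - q)).
Proof.
  intros HA Hq Hu n.
  assert (Hpartial : Cmod (prodC n (fun k => Cminus (RtoC 1) (u k)))
                     <= exp (A * (1 - q ^ n) / (1 - q))).
  { induction n as [|n IHn]; simpl prodC.
    - rewrite Cmod_1. replace (A * (1 - q ^ 0) / (1 - q)) with 0 by (simpl; field; lra).
      rewrite exp_0. lra.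
    - assert (Hfactor : Cmod (Cminus (RtoC 1) (u n)) <= exp (A * q ^ n)).
      { eapply Rle_trans; [|apply exp_ineq1_le].
        unfold Cminus. eapply Rle_trans; [apply Cmod_triangle|].
        rewrite Cmod_opp, Cmod_1. apply Rplus_le_compat_l, Hu. }
      rewrite Cmod_mult.
      eapply Rle_trans.
      { apply Rmult_le_compat; try apply Cmod_ge_0; eassumption. }
      rewrite <- exp_plus. right. f_equal. simpl. field. lra. }
  eapply Rle_trans; [exact Hpartial|]. apply exp_le.
  unfold Rdiv. apply Rmult_le_compat_r; [apply Rlt_le, Rinv_0_lt_compat; lra|].
  pose proof (pow_le q n (proj1 Hq)). nra.
Qed.

Lemma prodC_one_sub_cvg (u : nat -> C) (A q : R) :
  0 <= A -> 0 <= q < 1 -> (forall k, Cmod (u k) <= A * q ^ k) ->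
  exists L, filterlim (fun n => prodC n (fun k => Cminus (RtoC 1) (u k)))
                      eventually (locally L).
Proof.
  intros HA Hq Hu.
  apply (cvg_of_geometric_increments _ (exp (A / (1 - q)) * A) q Hq).
  intros n. simpl prodC.
  replace (Cminus (Cmult (prodC n (fun k => Cminus (RtoC 1) (u k))) (Cminus (RtoC 1) (u n)))
                  (prodC n (fun k => Cminus (RtoC 1) (u k))))
    with (Copp (Cmult (prodC n (fun k => Cminus (RtoC 1) (u k))) (u n))) by ring.
  rewrite Cmod_opp, Cmod_mult, Rmult_assoc.
  apply Rmult_le_compat; try apply Cmod_ge_0.
  - now apply Cmod_prodC_one_sub_le.
  - apply Hu.
Qed.

Lemma varpi_partial_cvg (z tau : C) : 0 < Im tau ->
  filterlim (fun n => prodC n (varpi_term z tau)) eventually (locally (varpi z tau)).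
Proof.
  intros Htau. unfold varpi, infprodC. apply epsilon_spec.
  apply (prodC_one_sub_cvg _ (exp (- (2 * PI * Im z))) (exp (- (2 * PI * Im tau)))).
  - left. apply exp_pos.
  - split; [left; apply exp_pos|].
    rewrite <- exp_0. apply exp_increasing. pose proof PI_RGT_0. nra.
  - intros k. right. rewrite Cmod_ee, <- exp_nat_mul, <- exp_plus.
    f_equal. destruct z, tau. simpl. ring.
Qed.

Lemma prodC_ext (n : nat) (f g : nat -> C) :
  (forall i, (i < n)%nat -> f i = g i) -> prodC n f = prodC n g.
Proof.
  induction n as [|n IHn]; intros Hfg; simpl; [reflexivity|].
  rewrite IHn, Hfg; [reflexivity | lia | intros i Hi; apply Hfg; lia].
Qed.

Lemma prodC_mul (n : nat) (f g : nat -> C) :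
  prodC n (fun i => Cmult (f i) (g i)) = Cmult (prodC n f) (prodC n g).
Proof. induction n as [|n IHn]; simpl; [ring|]. rewrite IHn. ring. Qed.

Lemma prodC_1 (n : nat) : prodC n (fun _ => RtoC 1) = RtoC 1.
Proof. induction n as [|n IHn]; simpl; [|rewrite IHn]; ring. Qed.

Lemma prodC_exchange (n m : nat) (f : nat -> nat -> C) :
  prodC n (fun i => prodC m (f i)) = prodC m (fun j => prodC n (fun i => f i j)).
Proof.
  induction n as [|n IHn]; simpl.
  - symmetry. apply prodC_1.
  - rewrite IHn, <- prodC_mul. reflexivity.
Qed.

Lemma prodC_add (n m : nat) (f : nat -> C) :
  prodC (n + m) f = Cmult (prodC n f) (prodC m (fun l => f (n + l)%nat)).
Proof.
  induction m as [|m IHm]; simpl.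
  - rewrite Nat.add_0_r. ring.
  - rewrite Nat.add_succ_r. simpl. rewrite IHm. ring.
Qed.

Lemma prodC_mul_index (m d : nat) (f : nat -> C) :
  prodC (m * d) f = prodC m (fun i => prodC d (fun l => f (i * d + l)%nat)).
Proof.
  induction m as [|m IHm]; simpl; [reflexivity|].
  rewrite Nat.add_comm, prodC_add, IHm. reflexivity.
Qed.

Lemma filterlim_Cmult (x y : C) :
  filterlim (fun z : C * C => Cmult (fst z) (snd z))
    (filter_prod (@locally C_UniformSpace x) (@locally C_UniformSpace y))
    (@locally C_UniformSpace (Cmult x y)).
Proof.
  intros P HP. apply locally_C in HP.
  destruct (@filterlim_mult C_AbsRing x y P HP) as [Q R HQ HR H].
  exists Q R; [apply locally_C; exact HQ | apply locally_C; exact HR | exact H].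
Qed.

Lemma filterlim_prodC (n : nat) (f : nat -> nat -> C) (v : nat -> C) :
  (forall i, (i < n)%nat -> filterlim (f i) eventually (locally (v i))) ->
  filterlim (fun N => prodC n (fun i => f i N)) eventually (locally (prodC n v)).
Proof.
  induction n as [|n IHn]; intros Hf; simpl.
  - apply filterlim_const.
  - eapply filterlim_comp_2; [apply IHn; intros; apply Hf; lia | apply Hf; lia |].
    apply filterlim_Cmult.
Qed.

Lemma filterlim_mul_index {T : Type} (d : nat) (f : nat -> T) (F : (T -> Prop) -> Prop) :
  (0 < d)%nat -> filterlim f eventually F -> filterlim (fun N => f (N * d)%nat) eventually F.
Proof.
  intros Hd Hf. eapply filterlim_comp; [|exact Hf].
  intros P [N HN]. exists N. intros n Hn. apply HN. nia.
Qed.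

Definition zeta (n : nat) : C := ee (RtoC (- / INR n)).

Lemma zeta_pow (n k : nat) : Cpow (zeta n) k = ee (RtoC (- INR k / INR n)).
Proof. unfold zeta. rewrite ee_pow. apply ee_ext; simpl; unfold Rdiv; ring. Qed.

Lemma zeta_pow_order (n : nat) : (0 < n)%nat -> Cpow (zeta n) n = RtoC 1.
Proof.
  intros Hn. rewrite zeta_pow, <- (ee_add_nat _ 1), <- (ee_nat 0).
  apply ee_ext; simpl; [field; apply not_0_INR; lia | ring].
Qed.

Lemma zeta_pow_neq_1 (n k : nat) :
  (0 < k)%nat -> (k < n)%nat -> Cpow (zeta n) k <> RtoC 1.
Proof.
  intros Hk Hkn Hone. rewrite zeta_pow in Hone.
  unfold ee, Cmult, RtoC, Re, Im in Hone; simpl in Hone.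
  injection Hone as Hcos Hsin.
  rewrite Rmult_0_r, Ropp_0, exp_0 in Hcos, Hsin.
  set (t := 2 * PI * (INR k / INR n)).
  replace (2 * PI * (- INR k / INR n)) with (- t) in Hcos, Hsin by (unfold t, Rdiv; ring).
  rewrite cos_neg in Hcos. rewrite sin_neg in Hsin.
  assert (Hkn' : 0 < INR k / INR n < 1).
  { apply lt_INR in Hk, Hkn. simpl in Hk. split.
    - apply Rdiv_lt_0_compat; lra.
    - apply (Rdiv_lt_1 (INR k) (INR n)); lra. }
  assert (Hsin0 : sin t = 0) by lra.
  pose proof PI_RGT_0.
  destruct (sin_eq_O_2PI_0 t) as [Ht|[Ht|Ht]]; unfold t in *; try nra.
  rewrite Ht, cos_PI in Hcos. lra.
Qed.

Lemma prodC_one_sub_mul_zeta (n : nat) (x : C) : (0 < n)%nat ->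
  prodC n (fun j => Cminus (RtoC 1) (Cmult x (Cpow (zeta n) j)))
  = Cminus (RtoC 1) (Cpow x n).
Proof.
  intros Hn. apply RootsOfUnity.prodC_one_sub_mul_root; [exact Hn | |].
  - now apply zeta_pow_order.
  - intros k Hk Hkn. now apply zeta_pow_neq_1.
Qed.

Definition mobius (a b d : R) (tau : C) : C :=
  Cdiv (Cplus (Cmult (RtoC a) tau) (RtoC b)) (RtoC d).

Lemma prodC_varpi_term_Minv (r1 r2 : R) (a b d m l : nat) (tau : C) :
  (0 < a)%nat -> (0 < d)%nat ->
  prodC a (fun j => varpi_term
    (Cminus (Cmult (RtoC (Minv2 (INR a) (INR b) (INR d) (INR j + r1) (INR l + r2))) tau)
            (RtoC (Minv1 (INR a) (INR b) (INR d) (INR j + r1) (INR l + r2))))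
    tau m)
  = varpi_term (Cminus (Cmult (RtoC r2) (mobius (INR a) (INR b) (INR d) tau)) (RtoC r1))
      (mobius (INR a) (INR b) (INR d) tau) (m * d + l).
Proof.
  intros Ha Hd.
  assert (Ha' : INR a <> 0) by (apply not_0_INR; lia).
  assert (Hd' : INR d <> 0) by (apply not_0_INR; lia).
  set (tau' := mobius (INR a) (INR b) (INR d) tau).
  set (w := Cplus (Cminus (Cmult (RtoC r2) tau') (RtoC r1))
                  (Cmult (RtoC (INR (m * d + l))) tau')).
  set (x := ee (Cdiv (Cminus w (RtoC (INR (b * m)))) (RtoC (INR a)))).
  rewrite (prodC_ext _ _ (fun j => Cminus (RtoC 1) (Cmult x (Cpow (zeta a) j)))).
  - rewrite prodC_one_sub_mul_zeta by exact Ha.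
    unfold varpi_term. fold w. f_equal. unfold x. rewrite ee_pow.
    rewrite <- (ee_add_nat _ (b * m)).
    unfold w, tau', mobius. rewrite !mult_INR, plus_INR, mult_INR.
    destruct tau as [t1 t2]. apply ee_ext; simpl; field; nra.
  - intros j _. unfold varpi_term. f_equal.
    unfold x. rewrite zeta_pow, <- ee_add. unfold w, tau', mobius, Minv1, Minv2.
    rewrite !mult_INR, plus_INR, mult_INR.
    destruct tau as [t1 t2]. apply ee_ext; simpl; field; nra.
Qed.

Lemma mobius_in_H (a b d : R) (tau : C) :
  0 < a -> 0 < d -> in_H tau -> in_H (mobius a b d tau).
Proof.
  unfold in_H, mobius. destruct tau as [t1 t2]. simpl. intros Ha Hd Ht.
  match goal with |- 0 < ?e => replace e with (a * t2 / d) by (field; lra) end.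
  apply Rdiv_lt_0_compat; nra.
Qed.

Lemma varpi_s_mobius (r1 r2 : R) (a b d : nat) (tau : C) :
  (0 < a)%nat -> (0 < d)%nat -> in_H tau ->
  varpi_s r1 r2 (mobius (INR a) (INR b) (INR d) tau)
  = prodC a (fun j => prodC d (fun l =>
      varpi_s (Minv1 (INR a) (INR b) (INR d) (INR j + r1) (INR l + r2))
              (Minv2 (INR a) (INR b) (INR d) (INR j + r1) (INR l + r2)) tau)).
Proof.
  intros Ha Hd Htau.
  set (tau' := mobius (INR a) (INR b) (INR d) tau).
  assert (Htau' : in_H tau') by (apply mobius_in_H; auto; apply lt_0_INR; lia).
  pose proof (varpi_partial_cvg (Cminus (Cmult (RtoC r2) tau') (RtoC r1)) _ Htau') as Hlhs.
  apply (filterlim_mul_index d) in Hlhs; [|exact Hd].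
  apply (@filterlim_locally_unique nat C_AbsRing C_NormedModule eventually _ _ _ _ Hlhs).
  eapply filterlim_ext.
  2:{ apply filterlim_prodC. intros j _. apply filterlim_prodC. intros l _.
      apply varpi_partial_cvg. exact Htau. }
  intros N. simpl.
  rewrite prodC_mul_index.
  rewrite (prodC_ext _ _ _ (fun j _ => prodC_exchange _ _ _)), prodC_exchange.
  apply prodC_ext. intros m _.
  rewrite prodC_exchange. apply prodC_ext. intros l _.
  apply prodC_varpi_term_Minv; assumption.
Qed.

Theorem proposition4p45 (r1 r2 : Q) (a b d : Z) (tau : C) :
  (0 <= b)%Z -> (b < a)%Z -> (1 <= d)%Z -> in_H tau ->
  varpi_s (Q2R r1) (Q2R r2)
    (Cdiv (Cplus (Cmult (RtoC (IZR a)) tau) (RtoC (IZR b))) (RtoC (IZR d)))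
  = prodC (Z.to_nat a) (fun j => prodC (Z.to_nat d) (fun l =>
      varpi_s
        (Minv1 (IZR a) (IZR b) (IZR d) (INR j + Q2R r1) (INR l + Q2R r2))
        (Minv2 (IZR a) (IZR b) (IZR d) (INR j + Q2R r1) (INR l + Q2R r2))
        tau)).
Proof.
  intros Hb Hba Hd Htau.
  rewrite <- (Z2Nat.id a), <- (Z2Nat.id b), <- (Z2Nat.id d) by lia.
  rewrite !Nat2Z.id, <- !INR_IZR_INZ.
  apply varpi_s_mobius; [lia | lia | exact Htau].
Qed.
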